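(* Let $(C^\bullet,d,d^* )$ be a $\mathbb{Z}_2$-graded bi-graded complex of finite-dimensional ${\bf k}$-vector spaces and suppose that the combinatorial Laplacian $\Delta=d^*d+dd^*$ has no zero eigenvalue. Then $H^\bullet(d)=0$ and $H_\bullet(d^* )=0$. Moreover, $d^*d$ maps $C_+^{\bar k}$ isomorphically onto itself for $k=0,1$, and (identifying $\operatorname{Det}(H^\bullet(d))\otimes\operatorname{Det}(H_\bullet(d^* ))^{-1}={\bf k}$) $$\tau(C^\bullet,d,d^* )=\operatorname{Det}\big(d^*d|_{C_+^{\bar 0}}\big)\cdot\operatorname{Det}\big(d^*d|_{C_+^{\bar 1}}\big)^{-1}.$$
   Context: ${\bf k}$ is a field of characteristic zero; bars on integers denote residues mod 2. A $\mathbb{Z}_2$-graded bi-graded complex $(C^\bullet,d,d^* )$ consists of finite-dimensional ${\bf k}$-vector spaces $C^{\bar 0},C^{\bar 1}$ and linear maps $d:C^{\bar k}\to C^{\overline{k+1}}$, $d^*:C^{\bar k}\to C^{\overline{k-1}}$ with $d^2=0$, $(d^* )^2=0$ ($d^*$ is not assumed to be an adjoint of $d$). $H^{\bar k}(d)$ is the cohomology of $(C^\bullet,d)$ and $H_{\bar k}(d^* )$ the homology of $(C^\bullet,d^* )$. For a finite-dimensional space $V$ of dimension $n$, $\operatorname{Det}(V)=\wedge^nV$ ($\operatorname{Det}(0)={\bf k}$), $\operatorname{Det}(V)^{-1}$ is its dual line; $\operatorname{Det}(C^\bullet)=\operatorname{Det}(C^{\bar0})\otimes\operatorname{Det}(C^{\bar1})^{-1}$,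 and similarly $\operatorname{Det}(H^\bullet(d))$, $\operatorname{Det}(H_\bullet(d^* ))$. For spaces $V_1,\dots,V_r$, $\mu_{V_1,\dots,V_r}:\operatorname{Det}V_1\otimes\cdots\otimes\operatorname{Det}V_r\to\operatorname{Det}(V_1\oplus\cdots\oplus V_r)$ is the fusion isomorphism $v_1\otimes\cdots\otimes v_r\mapsto v_1\wedge\cdots\wedge v_r$. Torsion: for $k=0,1$ choose decompositions $C^{\bar k}=B^{\bar k}\oplus H^{\bar k}\oplus A^{\bar k}$ with $B^{\bar k}\oplus H^{\bar k}=\operatorname{Ker}d\cap C^{\bar k}$, $B^{\bar k}=d(C^{\overline{k-1}})=d(A^{\overline{k-1}})$, and $C^{\bar k}=B_{\bar k}\oplus H_{\bar k}\oplus A_{\bar k}$ with $B_{\bar k}\oplus H_{\bar k}=\operatorname{Ker}d^*\cap C^{\bar k}$, $B_{\bar k}=d^*(C^{\overline{k+1}})=d^*(A_{\overline{k+1}})$. Given nonzero $c_{\bar k}\in\operatorname{Det}C^{\bar k}$, $x_{\bar k}\in\operatorname{Det}A^{\bar k}$, $y_{\bar k}\in\operatorname{Det}A_{\bar k}$, let $h_{\bar k}\in\operatorname{Det}H^{\bar k}$, $h'_{\bar k}\in\operatorname{Det}H_{\bar k}$ be the unique elements with $c_{\bar k}=\mu_{B^{\bar k},H^{\bar k},A^{\bar k}}(d(x_{\overline{k-1}})\otimes h_{\bar k}\otimes x_{\bar k})$ and $c_{\bar k}=\mu_{B_{\bar k},H_{\bar k},A_{\bar k}}(d^*(y_{\overline{k+1}})\otimes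 h'_{\bar k}\otimes y_{\bar k})$ (here $d(x)$, $d^*(y)$ are images under the maps induced by the isomorphisms $d:A^{\bar k}\to B^{\overline{k+1}}$, $d^*:A_{\bar k}\to B_{\overline{k-1}}$). Set $\phi(c)=h_{\bar0}\otimes h_{\bar1}^{-1}\in\operatorname{Det}H^\bullet(d)$ and $\phi'(c)=h'_{\bar0}\otimes h'^{-1}_{\bar1}\in\operatorname{Det}H_\bullet(d^* )$ for $c=c_{\bar0}\otimes c_{\bar1}^{-1}$ (identifying $H^{\bar k}\cong H^{\bar k}(d)$, $H_{\bar k}\cong H_{\bar k}(d^* )$). The Cappell–Miller torsion is $\tau(C^\bullet,d,d^* )=(-1)^{S(C^\bullet)}\phi(c)\,(\phi'(c))^{-1}\in\operatorname{Det}(H^\bullet(d))\otimes\operatorname{Det}(H_\bullet(d^* ))^{-1}$, where $S(C^\bullet)=\sum_{k=0,1}[\dim B_{\overline{k-1}}\dim B^{\overline{k+1}}+\dim B^{\overline{k+1}}\dim H_{\bar k}+\dim B_{\overline{k-1}}\dim H^{\bar k}]$. $C_+^{\bar k}:=\operatorname{Ker}d^*\cap C^{\bar k}$, $C_-^{\bar k}:=\operatorname{Ker}d\cap C^{\bar k}$. *)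

From HB Require Import structures.
From mathcomp Require Import all_boot all_order all_algebra.
Set Implicit Arguments. Unset Strict Implicit. Unset Printing Implicit Defensive.
Import GRing.Theory.
Local Open Scope ring_scope.

(* Model: C^{0} = F^n0, C^{1} = F^n1 (row vectors); a linear map
   C^{i} -> C^{j} is a matrix 'M_(ni, nj) acting on the right (v |-> v *m A).
   d0 : C^0 -> C^1, d1 : C^1 -> C^0   (the differential d),
   s0 : C^0 -> C^1, s1 : C^1 -> C^0   (the differential dstar, of degree -1 = +1 mod 2).
   A subspace is represented by a matrix whose row space is that subspace;
   a nonzero element of Det V is represented by a basis of V (its wedge). *)

(* Determinant of a matrix that is square (m = n); 0 otherwise. *)
Definition sqdet (F : fieldType) (m n : nat) (M : 'M[F]_(m, n)) : F :=
  \det (conform_mx (0 : 'M[F]_n) M).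

Definition laplacian (F : fieldType) (n0 n1 : nat)
  (d0 : 'M[F]_(n0, n1)) (d1 : 'M[F]_(n1, n0))
  (s0 : 'M[F]_(n0, n1)) (s1 : 'M[F]_(n1, n0)) : 'M[F]_(n0 + n1) :=
  block_mx (d0 *m s1 + s0 *m d1) 0 0 (d1 *m s0 + s1 *m d0).

Definition restr_iso (F : fieldType) (n : nat) (A S : 'M[F]_n) : Prop :=
  (S *m A == S)%MS /\
  (forall v : 'rV[F]_n, (v <= S)%MS -> v *m A = 0 -> v = 0).

Definition restr_det (F : fieldType) (n : nat) (A S : 'M[F]_n) : F :=
  \det (row_base S *m A *m pinvmx (row_base S)).

(* Admissible decomposition C^k = B^k (+) H^k (+) A^k for a differential with
   incoming map dprev : C^{k-1} -> C^k and outgoing map dk : C^k -> C^{k+1}: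
   Xprev = basis of A^{k-1}, Hk = basis of H^k, Xk = basis of A^k;
   B^k = dprev(A^{k-1}) = dprev(C^{k-1}),  B^k (+) H^k = Ker dk, and the
   rows of [dprev(Xprev); Hk; Xk] form a basis of C^k. *)
Definition dec_ok (F : fieldType) (p n q b h a : nat)
  (dprev : 'M[F]_(p, n)) (dk : 'M[F]_(n, q))
  (Xprev : 'M[F]_(b, p)) (Hk : 'M[F]_(h, n)) (Xk : 'M[F]_(a, n)) : bool :=
  [&& (Xprev *m dprev == dprev)%MS,
      (col_mx (Xprev *m dprev) Hk == kermx dk)%MS,
      row_free (col_mx (col_mx (Xprev *m dprev) Hk) Xk) &
      row_full (col_mx (col_mx (Xprev *m dprev) Hk) Xk)].

(* Coefficient eta with  c = mu(d(x) (x) (eta * omega_H) (x) x'),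
   where omega_H is the wedge of the chosen basis Hk of H^k. *)
Definition eta (F : fieldType) (n b h a : nat) (c : 'M[F]_n)
  (Bm : 'M[F]_(b, n)) (Hk : 'M[F]_(h, n)) (Xk : 'M[F]_(a, n)) : F :=
  \det c / sqdet (col_mx (col_mx Bm Hk) Xk).

Definition CM_sign (F : fieldType) (n0 n1 : nat)
  (d0 : 'M[F]_(n0, n1)) (d1 : 'M[F]_(n1, n0))
  (s0 : 'M[F]_(n0, n1)) (s1 : 'M[F]_(n1, n0)) : nat :=
  let dimHu0 := (\rank (kermx d0) - \rank d1)%N in
  let dimHu1 := (\rank (kermx d1) - \rank d0)%N in
  let dimHl0 := (\rank (kermx s0) - \rank s1)%N in
  let dimHl1 := (\rank (kermx s1) - \rank s0)%N in
  (\rank s0 * \rank d0 + \rank d0 * dimHl0 + \rank s0 * dimHu0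
   + (\rank s1 * \rank d1 + \rank d1 * dimHl1 + \rank s1 * dimHu1))%N.

(* Coordinate of tau(C,d,dstar) w.r.t. the generator
   (w0 (x) w1^{-1}) (x) (w'0 (x) w'1^{-1})^{-1} of
   Det(H(d)) (x) Det(H(dstar))^{-1} determined by the chosen bases H0,H1 of
   H^0,H^1 and H'0,H'1 of H_0,H_1 (when these are all empty, the generator
   is 1 in k and the coordinate is tau itself). *)
Definition CM_torsion_coord (F : fieldType) (n0 n1 : nat)
  (d0 : 'M[F]_(n0, n1)) (d1 : 'M[F]_(n1, n0))
  (s0 : 'M[F]_(n0, n1)) (s1 : 'M[F]_(n1, n0))
  (a0 a1 h0 h1 a0' a1' h0' h1' : nat)
  (c0 : 'M[F]_n0) (c1 : 'M[F]_n1)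
  (X0 : 'M[F]_(a0, n0)) (X1 : 'M[F]_(a1, n1))
  (H0 : 'M[F]_(h0, n0)) (H1 : 'M[F]_(h1, n1))
  (Y0 : 'M[F]_(a0', n0)) (Y1 : 'M[F]_(a1', n1))
  (H'0 : 'M[F]_(h0', n0)) (H'1 : 'M[F]_(h1', n1)) : F :=
  let e0 := eta c0 (X1 *m d1) H0 X0 in
  let e1 := eta c1 (X0 *m d0) H1 X1 in
  let e'0 := eta c0 (Y1 *m s1) H'0 Y0 in
  let e'1 := eta c1 (Y0 *m s0) H'1 Y1 in
  (-1) ^+ CM_sign d0 d1 s0 s1 * ((e0 / e1) / (e'0 / e'1)).

(* "tau(C,d,dstar) has coordinate t": for every admissible choice of
   decompositions and of nonzero elements c_k (bases c0,c1 of C^0,C^1),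
   x_k (bases X of A^k), y_k (bases Y of A_k), the resulting coordinate is t. *)
Definition CM_torsion_is (F : fieldType) (n0 n1 : nat)
  (d0 : 'M[F]_(n0, n1)) (d1 : 'M[F]_(n1, n0))
  (s0 : 'M[F]_(n0, n1)) (s1 : 'M[F]_(n1, n0)) (t : F) : Prop :=
  forall (a0 a1 h0 h1 a0' a1' h0' h1' : nat)
    (c0 : 'M[F]_n0) (c1 : 'M[F]_n1)
    (X0 : 'M[F]_(a0, n0)) (X1 : 'M[F]_(a1, n1))
    (H0 : 'M[F]_(h0, n0)) (H1 : 'M[F]_(h1, n1))
    (Y0 : 'M[F]_(a0', n0)) (Y1 : 'M[F]_(a1', n1))
    (H'0 : 'M[F]_(h0', n0)) (H'1 : 'M[F]_(h1', n1)),
    c0 \in unitmx -> c1 \in unitmx ->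
    dec_ok d1 d0 X1 H0 X0 -> dec_ok d0 d1 X0 H1 X1 ->
    dec_ok s1 s0 Y1 H'0 Y0 -> dec_ok s0 s1 Y0 H'1 Y1 ->
    CM_torsion_coord d0 d1 s0 s1 c0 c1 X0 X1 H0 H1 Y0 Y1 H'0 H'1 = t.

From Pilot Require Import Defs.
From HB Require Import structures.
From mathcomp Require Import all_boot all_order all_algebra ring.
Set Implicit Arguments. Unset Strict Implicit. Unset Printing Implicit Defensive.
Import GRing.Theory.
Local Open Scope ring_scope.

(** If the Laplacian is invertible, then so are its two blocks [D_k], and
    since [D_k] commutes with [d] and [d*], every [d]-cycle [v] is the boundary
    [d (d* D^-1 v)]: both differentials are acyclic and [C^k = im d (+) im d*].
    All homology spaces vanish, so each [eta] is [det c_k] divided by the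
    determinant of an adapted basis [(d x_{k-1}, x_k)]. Multiplying such a
    basis by the isomorphism [d + d* : C^k -> C^{k+1}] yields a block
    triangular matrix whose diagonal blocks are the matrix of [d*] from
    [d(A^{k-1})] to [im d*] and the adapted basis [(d* y_k, d x_k)] of
    [C^{k+1}]. In the torsion quotient the [c_k], [det (d + d* )] and these
    adapted bases of [C^{k+1}] cancel (up to two equal block-exchange signs),
    and what remains are the matrices of [d] and [d*] between [im d] and
    [im d*], whose products are the matrices of [d* d] on [C_+^k = im d*].
    Finally [S(C) = 2 dim B^0 dim B^1] is even, because [d*] on [C^{k+1}]
    has the same rank as [d] on [C^k]. *)

Section NonsquareDeterminant.
Variable F : fieldType.

Lemma sqdetE n (M : 'M[F]_n) : sqdet M = \det M.
Proof. by rewrite /sqdet conform_mx_id. Qed.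

Lemma sqdetM m p n (A : 'M[F]_(m, p)) (B : 'M[F]_(p, n)) :
  m = p -> p = n -> sqdet (A *m B) = sqdet A * sqdet B.
Proof. by move=> e1 e2; subst m n; rewrite !sqdetE det_mulmx. Qed.

Lemma sqdet_tr m n (M : 'M[F]_(m, n)) : m = n -> sqdet M^T = sqdet M.
Proof. by move=> e; subst m; rewrite !sqdetE det_tr. Qed.

Lemma sqdet_castmx m m' n n' (e : (m = m') * (n = n')) (M : 'M[F]_(m, n)) :
  sqdet (castmx e M) = sqdet M.
Proof. by case: e => e1 e2; case: m' / e1; case: n' / e2; rewrite castmx_id. Qed.

Lemma sqdet_lblock m1 n1 m2 (A : 'M[F]_(m1, n1)) (C : 'M[F]_(m2, n1)) :
  m1 = n1 -> sqdet (block_mx A 0 C 1%:M) = sqdet A.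
Proof. by move=> e; subst m1; rewrite !sqdetE det_lblock det1 mulr1. Qed.

Lemma sqdet_neq0 m n (M : 'M[F]_(m, n)) :
  row_free M -> row_full M -> sqdet M != 0.
Proof.
move=> fM uM; have e : m = n by rewrite -(eqP fM) (eqP uM).
by subst m; rewrite sqdetE -unitfE -unitmxE -row_free_unit.
Qed.

(* Exchanging two row blocks multiplies the determinant by a sign depending
   only on the block sizes, so two such exchanges cancel. *)
Lemma sqdet_col_mxC p q n n' (A : 'M[F]_(p, n)) (B : 'M[F]_(q, n))
    (A' : 'M[F]_(p, n')) (B' : 'M[F]_(q, n')) :
  (p + q)%N = n -> (p + q)%N = n' ->
  sqdet (col_mx B A) * sqdet (col_mx B' A') =
  sqdet (col_mx A B) * sqdet (col_mx A' B').
Proof.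
move=> en en'.
pose J r t : 'M[F]_(t + r, r + t) := block_mx 0 1%:M 1%:M 0.
have swap r t m (X : 'M[F]_(r, m)) (Y : 'M[F]_(t, m)) :
    col_mx Y X = J r t *m col_mx X Y.
  by rewrite mul_block_col !mul0mx !mul1mx addr0 add0r.
have J_sq : sqdet (J p q) * sqdet (J p q) = 1.
  have JC : sqdet (J p q) = sqdet (J q p).
    rewrite -sqdet_tr ?(addnC q) //.
    by rewrite tr_block_mx !trmx0 !tr_scalar_mx.
  rewrite {2}JC -sqdetM ?(addnC q) // mulmx_block !mul0mx !mulmx0 !mul1mx.
  by rewrite !add0r !addr0 -scalar_mx_block sqdetE det1.
by rewrite !(swap p q) !sqdetM ?(addnC q) // mulrACA J_sq mul1r.
Qed.

(* [d + s] maps the rows [Xp dp] into [im s] and the rows [X] to [X d]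
   modulo [im s]. *)
Lemma sqdet_col_mx_mulD p b a a' n q (dp : 'M[F]_(p, n)) (d s : 'M[F]_(n, q))
    (Xp : 'M[F]_(b, p)) (X : 'M[F]_(a, n)) (Y : 'M[F]_(a', n)) :
  dp *m d = 0 -> (Y *m s == s)%MS -> b = a' -> (b + a)%N = n -> n = q ->
  sqdet (col_mx (Xp *m dp) X) * sqdet (d + s) =
  sqdet (Xp *m dp *m s *m pinvmx (Y *m s)) * sqdet (col_mx (Y *m s) (X *m d)).
Proof.
move=> dpd /eqmxP eYs eb en eq.
have im_s m (Z : 'M[F]_(m, n)) : (Z *m s <= Y *m s)%MS by rewrite eYs submxMl.
rewrite -sqdetM //.
have -> : col_mx (Xp *m dp) X *m (d + s) =
    block_mx (Xp *m dp *m s *m pinvmx (Y *m s)) 0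
             (X *m s *m pinvmx (Y *m s)) 1%:M *m col_mx (Y *m s) (X *m d).
  rewrite mul_block_col mul0mx addr0 mul1mx !mulmxKpV ?im_s //.
  by rewrite mul_col_mx !mulmxDr -(mulmxA Xp) dpd mulmx0 add0r addrC.
by rewrite sqdetM ?sqdet_lblock // ?eb // -eb en.
Qed.

End NonsquareDeterminant.

Section RestrictedDeterminant.
Variable F : fieldType.

Lemma restr_det_basis n k (A S : 'M[F]_n) (B : 'M[F]_(k, n)) (M : 'M[F]_k) :
  row_free B -> (B == S)%MS -> B *m A = M *m B -> restr_det A S = \det M.
Proof.
move=> fB eBS eA.
set Rb := row_base S.
have eRB : (Rb :=: B)%MS := eqmx_trans (eq_row_base S) (eqmx_sym (eqmxP eBS)).
have rk : \rank S = k by rewrite -(eqmx_rank eBS) (eqP fB).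
set P := Rb *m pinvmx B.
have hP : P *m B = Rb by rewrite mulmxKpV // eRB.
set Q := B *m pinvmx Rb.
have hQ : Q *m Rb = B by rewrite mulmxKpV // eRB.
set Kd := Rb *m A *m pinvmx Rb.
have hK : Kd *m Rb = Rb *m A.
  rewrite mulmxKpV // -{1}hP -mulmxA eA mulmxA.
  by apply: (submx_trans (submxMl _ _)); rewrite eRB.
have QP : Q *m P = 1%:M.
  by apply: (row_free_inj fB); rewrite /= -mulmxA hP hQ mul1mx.
have KP : Kd *m P = P *m M.
  by apply: (row_free_inj fB); rewrite /= -mulmxA hP hK -{1}hP -mulmxA eA mulmxA.
have nP : sqdet P != 0.
  apply/eqP => P0; have := congr1 (@sqdet F k k) QP.
  by rewrite sqdetM ?rk // P0 mulr0 sqdetE det1 => /eqP; rewrite eq_sym oner_eq0.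
rewrite /restr_det -/Rb -/Kd -!sqdetE.
by apply: (mulIf nP); rewrite -sqdetM ?rk // KP sqdetM ?rk // mulrC.
Qed.

Lemma restr_det_mulmx n m k (A1 : 'M[F]_(n, m)) (A2 : 'M[F]_(m, n))
    (S : 'M[F]_n) (B : 'M[F]_(k, n)) (C : 'M[F]_(k, m)) :
  row_free B -> (B == S)%MS -> (B *m A1 <= C)%MS -> (C *m A2 <= B)%MS ->
  restr_det (A1 *m A2) S =
  \det (B *m A1 *m pinvmx C) * \det (C *m A2 *m pinvmx B).
Proof.
move=> fB eBS sA1 sA2; rewrite -det_mulmx; apply: restr_det_basis fB eBS _.
by rewrite -(mulmxA _ _ B) (mulmxKpV sA2) [RHS]mulmxA (mulmxKpV sA1) mulmxA.
Qed.

End RestrictedDeterminant.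

Section AcyclicDecomposition.
Variable F : fieldType.

Lemma row_free_col_mxl m1 m2 n (A : 'M[F]_(m1, n)) (B : 'M[F]_(m2, n)) :
  row_free (col_mx A B) -> row_free A.
Proof.
move=> fAB; apply/inj_row_free => v vA.
have : row_mx v 0 *m col_mx A B = 0 *m col_mx A B.
  by rewrite mul_row_col vA !mul0mx addr0.
by move/(row_free_inj fAB)/eqP; rewrite row_mx_eq0 => /andP[/eqP].
Qed.

Lemma col_mx_row0 m n a (A : 'M[F]_(m, n)) (H : 'M[F]_(0, n)) (X : 'M[F]_(a, n)) :
  col_mx A X = castmx (esym (addnA m 0 a), erefl n) (col_mx (col_mx A H) X).
Proof.
rewrite -col_mxA; congr col_mx.
apply/matrixP => i j; rewrite mxE; case: splitP => [[]//|k /= ek].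
by congr (X _ _); apply: val_inj.
Qed.

Lemma eta_row0 n b a (c : 'M[F]_n) (Bm : 'M[F]_(b, n)) (H : 'M[F]_(0, n))
    (X : 'M[F]_(a, n)) :
  Defs.eta c Bm H X = \det c / sqdet (col_mx Bm X).
Proof. by rewrite /Defs.eta (col_mx_row0 Bm H X) sqdet_castmx. Qed.

Lemma dec_ok_dimH0 p n q b h a (dp : 'M[F]_(p, n)) (dk : 'M[F]_(n, q))
    (Xp : 'M[F]_(b, p)) (Hk : 'M[F]_(h, n)) (Xk : 'M[F]_(a, n)) :
  dec_ok dp dk Xp Hk Xk -> (kermx dk == dp)%MS -> h = 0%N.
Proof.
case/and4P => eXp eker fr _ ek.
have /row_free_col_mxl/eqP rkBH := fr.
have : (b + h <= b)%N.
  by rewrite -rkBH (eqmx_rank eker) (eqmx_rank ek) -(eqmx_rank eXp) rank_leq_row.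
by rewrite -{2}[b]addn0 leq_add2l leqn0 => /eqP.
Qed.

Lemma dec_ok_acyclic p n q b a (dp : 'M[F]_(p, n)) (dk : 'M[F]_(n, q))
    (Xp : 'M[F]_(b, p)) (Hk : 'M[F]_(0, n)) (Xk : 'M[F]_(a, n)) :
  dec_ok dp dk Xp Hk Xk -> (kermx dk == dp)%MS ->
  [/\ row_free (col_mx (Xp *m dp) Xk), row_full (col_mx (Xp *m dp) Xk),
      (Xp *m dp == dp)%MS, b = \rank dp & a = \rank dk].
Proof.
case/and4P => eXp _ fr fu ek.
have fr' : row_free (col_mx (Xp *m dp) Xk).
  by rewrite (col_mx_row0 _ Hk) row_free_castmx.
have fu' : row_full (col_mx (Xp *m dp) Xk).
  by rewrite (col_mx_row0 _ Hk) row_full_castmx.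
have rb : b = \rank dp by rewrite -(eqmx_rank eXp) (eqP (row_free_col_mxl fr')).
split => //.
have ba : (b + a)%N = n by rewrite -(eqP fr') (eqP fu').
have rk : \rank dp = (n - \rank dk)%N by rewrite -mxrank_ker (eqmx_rank ek).
by rewrite -[a](addKn b) ba rb rk subKn // rank_leq_row.
Qed.

End AcyclicDecomposition.

Lemma invmx_intertwine (F : fieldType) n m (A : 'M[F]_n) (B : 'M[F]_m)
    (X : 'M[F]_(n, m)) :
  A \in unitmx -> B \in unitmx -> A *m X = X *m B -> invmx A *m X = X *m invmx B.
Proof.
move=> uA uB e.
by rewrite -[LHS]mulmx1 -(mulmxV uB) mulmxA -(mulmxA _ X B) -e mulKmx.
Qed.

Section InvertibleLaplacian.
Variables (F : fieldType) (n0 n1 : nat).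
Variables (d0 : 'M[F]_(n0, n1)) (d1 : 'M[F]_(n1, n0)).
Variables (s0 : 'M[F]_(n0, n1)) (s1 : 'M[F]_(n1, n0)).
Hypotheses (dd01 : d0 *m d1 = 0) (dd10 : d1 *m d0 = 0).
Hypotheses (ss01 : s0 *m s1 = 0) (ss10 : s1 *m s0 = 0).
Let D0 := d0 *m s1 + s0 *m d1.
Let D1 := d1 *m s0 + s1 *m d0.
Hypotheses (uD0 : D0 \in unitmx) (uD1 : D1 \in unitmx).

Let D1d1 : D1 *m d1 = d1 *m D0.
Proof.
by rewrite mulmxDl mulmxDr -!mulmxA dd01 mulmx0 addr0 !mulmxA dd10 mul0mx add0r.
Qed.

Let D0s0 : D0 *m s0 = s0 *m D1.
Proof.
by rewrite mulmxDl mulmxDr -!mulmxA ss10 mulmx0 add0r !mulmxA ss01 mul0mx addr0.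
Qed.

Lemma kermx_eq_im : (kermx d0 == d1)%MS.
Proof.
apply/andP; split; last by rewrite sub_kermx dd10.
set K := kermx d0.
have Kd0 : K *m d0 = 0 by apply/sub_kermxP.
have -> : K = K *m s0 *m invmx D1 *m d1.
  rewrite -mulmxA (invmx_intertwine uD1 uD0 D1d1) !mulmxA.
  by rewrite -{1}[K](mulmxK uD0) mulmxDr !mulmxA Kd0 mul0mx add0r.
exact: submxMl.
Qed.

Lemma restr_iso_dstar_d : restr_iso (d0 *m s1) (kermx s0).
Proof.
set K := kermx s0.
have Ks0 : K *m s0 = 0 by apply/sub_kermxP.
have D0K : invmx D0 *m s0 = s0 *m invmx D1 := invmx_intertwine uD0 uD1 D0s0.
split.
  apply/andP; split; first by rewrite sub_kermx -!mulmxA ss10 !mulmx0.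
  have K_im : K = K *m invmx D0 *m (d0 *m s1).
    rewrite -{1}[K](mulmxKV uD0) mulmxDr [X in _ + X]mulmxA.
    by rewrite -(mulmxA K (invmx D0) s0) D0K mulmxA Ks0 !mul0mx addr0.
  by rewrite {1}K_im submxMr // sub_kermx -mulmxA D0K mulmxA Ks0 mul0mx.
move=> v vK vA.
have vs0 : v *m s0 = 0 by apply/sub_kermxP; apply: submx_trans vK _.
by rewrite -[v](mulmxK uD0) mulmxDr !mulmxA -(mulmxA v d0) vA vs0 mul0mx addr0 mul0mx.
Qed.

Lemma rank_dstar_add_rank_d : (\rank s1 + \rank d1)%N = n0.
Proof.
have := mxrank_sum_cap s1 d1.
have -> : \rank (s1 + d1)%MS = n0.
  apply/eqP; rewrite eqn_leq rank_leq_col -{1}(mxrank1 F n0) mxrankS //.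
  by rewrite -(mulVmx uD0) mulmxDr !mulmxA addmx_sub_adds // submxMl.
suff -> : \rank (s1 :&: d1)%MS = 0%N by rewrite addn0.
apply/eqP; rewrite mxrank_eq0; apply/eqP.
set C := (s1 :&: d1)%MS.
have Cs0 : C *m s0 = 0.
  by rewrite /C; have [W ->] := submxP (capmxSl s1 d1); rewrite -mulmxA ss10 mulmx0.
have Cd0 : C *m d0 = 0.
  by rewrite /C; have [W ->] := submxP (capmxSr s1 d1); rewrite -mulmxA dd10 mulmx0.
by rewrite -[C](mulmxK uD0) mulmxDr !mulmxA Cs0 Cd0 !mul0mx addr0 mul0mx.
Qed.

Lemma row_free_d_add_dstar : row_free (d0 + s0).
Proof.
apply: inj_row_free => v vds.
have vd0s1 : v *m d0 *m s1 = 0.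
  move/(congr1 (mulmx^~ s1)): vds.
  by rewrite /= mul0mx mulmxDr mulmxDl -(mulmxA v s0) ss01 mulmx0 addr0.
have vs0d1 : v *m s0 *m d1 = 0.
  move/(congr1 (mulmx^~ d1)): vds.
  by rewrite /= mul0mx mulmxDr mulmxDl -(mulmxA v d0) dd01 mulmx0 add0r.
by rewrite -[v](mulmxK uD0) mulmxDr !mulmxA vd0s1 vs0d1 addr0 mul0mx.
Qed.

End InvertibleLaplacian.

Lemma torsion_ratio (F : fieldType)
    (c0 c1 x0 x1 y0 y1 phi psi p q r s g0 g1 g0' g1' : F) :
  c0 != 0 -> c1 != 0 -> x0 != 0 -> x1 != 0 -> y0 != 0 -> y1 != 0 ->
  phi != 0 -> psi != 0 ->
  x0 * phi = r * g1' -> y0 * phi = p * g1 ->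
  x1 * psi = q * g0 -> y1 * psi = s * g0' -> g1' * g0' = g1 * g0 ->
  c0 / x0 / (c1 / x1) / (c0 / y0 / (c1 / y1)) = (p * q) / (s * r).
Proof.
move=> c0n c1n x0n x1n y0n y1n phin psin ex0 ey0 ex1 ey1 eg.
have factors_neq0 (a b c d : F) :
    a != 0 -> b != 0 -> a * b = c * d -> c != 0 /\ d != 0.
  by move=> an bn e; have := mulf_neq0 an bn; rewrite e mulf_eq0 negb_or => /andP.
have [rn _] := factors_neq0 _ _ _ _ x0n phin ex0.
have [_ g1n] := factors_neq0 _ _ _ _ y0n phin ey0.
have [_ g0n] := factors_neq0 _ _ _ _ x1n psin ex1.
have [sn _] := factors_neq0 _ _ _ _ y1n psin ey1.
have -> : c0 / x0 / (c1 / x1) / (c0 / y0 / (c1 / y1)) =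
          (x1 * psi) * (y0 * phi) / ((x0 * phi) * (y1 * psi)).
  by field; rewrite c0n c1n x0n x1n y0n y1n phin psin.
rewrite ex0 ey0 ex1 ey1 (mulrACA r) eg.
by field; rewrite rn sn g0n g1n.
Qed.

Section AcyclicTorsion.
Variables (F : fieldType) (n0 n1 : nat).
Variables (d0 : 'M[F]_(n0, n1)) (d1 : 'M[F]_(n1, n0)).
Variables (s0 : 'M[F]_(n0, n1)) (s1 : 'M[F]_(n1, n0)).
Hypotheses (dd01 : d0 *m d1 = 0) (dd10 : d1 *m d0 = 0).
Hypotheses (ss01 : s0 *m s1 = 0) (ss10 : s1 *m s0 = 0).
Hypotheses (uD0 : (d0 *m s1 + s0 *m d1) \in unitmx)
           (uD1 : (d1 *m s0 + s1 *m d0) \in unitmx).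

Let uD0' : (s0 *m d1 + d0 *m s1) \in unitmx. Proof. by rewrite addrC. Qed.
Let uD1' : (s1 *m d0 + d1 *m s0) \in unitmx. Proof. by rewrite addrC. Qed.

Let kd0 := kermx_eq_im dd01 dd10 uD0 uD1.
Let kd1 := kermx_eq_im dd10 dd01 uD1 uD0.
Let ks0 := kermx_eq_im ss01 ss10 uD0' uD1'.
Let ks1 := kermx_eq_im ss10 ss01 uD1' uD0'.

Let rank_d0 : (\rank d1 + \rank d0)%N = n0.
Proof. by rewrite -(eqmx_rank kd0) mxrank_ker subnK // rank_leq_row. Qed.

Let rank_d1 : (\rank d0 + \rank d1)%N = n1.
Proof. by rewrite -(eqmx_rank kd1) mxrank_ker subnK // rank_leq_row. Qed.

Let rank_s1 : \rank s1 = \rank d0.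
Proof.
apply/eqP; rewrite -(eqn_add2r (\rank d1)).
by rewrite (rank_dstar_add_rank_d dd10 ss10 uD0) addnC rank_d0.
Qed.

Let rank_s0 : \rank s0 = \rank d1.
Proof.
apply/eqP; rewrite -(eqn_add2r (\rank d0)).
by rewrite (rank_dstar_add_rank_d dd01 ss01 uD1) addnC rank_d1.
Qed.

Lemma CM_sign_acyclic : (-1) ^+ CM_sign d0 d1 s0 s1 = 1 :> F.
Proof.
rewrite /CM_sign (eqmx_rank kd0) (eqmx_rank kd1) (eqmx_rank ks0).
rewrite (eqmx_rank ks1) !subnn !muln0 !addn0 rank_s0 rank_s1 mulnC addnn.
by rewrite -mul2n exprM sqrrN !expr1n.
Qed.

Section AdaptedBases.
Variables (a0 a1 : nat) (X0 : 'M[F]_(a0, n0)) (X1 : 'M[F]_(a1, n1)).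
Variables (Y0 : 'M[F]_(a1, n0)) (Y1 : 'M[F]_(a0, n1)).
Hypotheses (eX0 : (X0 *m d0 == d0)%MS) (eX1 : (X1 *m d1 == d1)%MS).
Hypotheses (eY0 : (Y0 *m s0 == s0)%MS) (eY1 : (Y1 *m s1 == s1)%MS).
Hypotheses (fY0 : row_free (Y0 *m s0)) (fY1 : row_free (Y1 *m s1)).
Hypotheses (en0 : (a1 + a0)%N = n0) (en1 : (a0 + a1)%N = n1).

Let en0' : (a0 + a1)%N = n0. Proof. by rewrite addnC. Qed.
Let en1' : (a1 + a0)%N = n1. Proof. by rewrite addnC. Qed.
Let en : n0 = n1. Proof. by rewrite -en0 -en1 addnC. Qed.

Let im_mx m p n (W : 'M[F]_(m, p)) (f : 'M[F]_(p, n)) q (Z : 'M[F]_(q, p)) :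
  (W *m f == f)%MS -> (Z *m f <= W *m f)%MS.
Proof. by move=> /eqmxP ->; exact: submxMl. Qed.

Lemma CM_torsion_ratio_adapted (c0 : 'M[F]_n0) (c1 : 'M[F]_n1) :
  c0 \in unitmx -> c1 \in unitmx ->
  sqdet (col_mx (X1 *m d1) X0) != 0 -> sqdet (col_mx (X0 *m d0) X1) != 0 ->
  sqdet (col_mx (Y1 *m s1) Y0) != 0 -> sqdet (col_mx (Y0 *m s0) Y1) != 0 ->
  \det c0 / sqdet (col_mx (X1 *m d1) X0) / (\det c1 / sqdet (col_mx (X0 *m d0) X1))
  / (\det c0 / sqdet (col_mx (Y1 *m s1) Y0) / (\det c1 / sqdet (col_mx (Y0 *m s0) Y1)))
  = restr_det (d0 *m s1) (kermx s0) / restr_det (d1 *m s0) (kermx s1).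
Proof.
move=> uc0 uc1 x0n x1n y0n y1n.
rewrite (restr_det_mulmx (C := X0 *m d0) fY1) ?im_mx //;
  last exact/eqmxP/(eqmx_trans (eqmxP eY1))/eqmx_sym/eqmxP.
rewrite (restr_det_mulmx (C := X1 *m d1) fY0) ?im_mx //;
  last exact/eqmxP/(eqmx_trans (eqmxP eY0))/eqmx_sym/eqmxP.
have fphi := row_free_d_add_dstar dd01 ss01 uD0.
have fpsi := row_free_d_add_dstar dd10 ss10 uD1.
rewrite -!sqdetE.
apply: (torsion_ratio _ _ x0n x1n y0n y1n
  (phi := sqdet (d0 + s0)) (psi := sqdet (d1 + s1))).
- by rewrite sqdetE -unitfE -unitmxE.
- by rewrite sqdetE -unitfE -unitmxE.
- by rewrite sqdet_neq0 // /row_full (eqP fphi) en.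
- by rewrite sqdet_neq0 // /row_full (eqP fpsi) en.
- exact: (sqdet_col_mx_mulD X1 _ dd10 eY0 erefl en0 en).
- by rewrite addrC; apply: (sqdet_col_mx_mulD Y1 _ ss10 eX0 erefl en0' en).
- exact: (sqdet_col_mx_mulD X0 _ dd01 eY1 erefl en1 (esym en)).
- by rewrite addrC; apply: (sqdet_col_mx_mulD Y0 _ ss01 eX1 erefl en1' (esym en)).
- exact: sqdet_col_mxC en1 en0'.
Qed.

End AdaptedBases.

(* With vanishing homology the decompositions carry no [H] part, and the
   [A_k] have the dimensions of the [A^k] of the other degree. *)
Lemma CM_torsion_acyclic :
  CM_torsion_is d0 d1 s0 s1
    (restr_det (d0 *m s1) (kermx s0) / restr_det (d1 *m s0) (kermx s1)).
Proof.
move=> a0 a1 h0 h1 a0' a1' h0' h1' c0 c1 X0 X1 H0 H1 Y0 Y1 H'0 H'1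
  uc0 uc1 decX0 decX1 decY0 decY1.
move: (dec_ok_dimH0 decX0 kd0) (dec_ok_dimH0 decX1 kd1) => ? ?; subst h0 h1.
move: (dec_ok_dimH0 decY0 ks0) (dec_ok_dimH0 decY1 ks1) => ? ?; subst h0' h1'.
have [fX0 uX0 eX1 ra1 ra0] := dec_ok_acyclic decX0 kd0.
have [fX1 uX1 eX0 _ _] := dec_ok_acyclic decX1 kd1.
have [fY0 uY0 eY1 ra1' ra0'] := dec_ok_acyclic decY0 ks0.
have [fY1 uY1 eY0 _ _] := dec_ok_acyclic decY1 ks1.
have ea1' : a1' = a0 by rewrite ra1' ra0 rank_s1.
have ea0' : a0' = a1 by rewrite ra0' ra1 rank_s0.
clear ra1' ra0'; subst a1' a0'.
rewrite /CM_torsion_coord CM_sign_acyclic mul1r !eta_row0.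
apply: CM_torsion_ratio_adapted; rewrite ?sqdet_neq0 //.
- exact: row_free_col_mxl fY1.
- exact: row_free_col_mxl fY0.
- by rewrite ra1 ra0.
- by rewrite ra1 ra0.
Qed.

End AcyclicTorsion.

Theorem proposition2p1 (F : fieldType) (charF0 : [pchar F] =i pred0)
  (n0 n1 : nat)
  (d0 : 'M[F]_(n0, n1)) (d1 : 'M[F]_(n1, n0))
  (s0 : 'M[F]_(n0, n1)) (s1 : 'M[F]_(n1, n0)) :
  d0 *m d1 = 0 -> d1 *m d0 = 0 -> s0 *m s1 = 0 -> s1 *m s0 = 0 ->
  ~~ eigenvalue (laplacian d0 d1 s0 s1) 0 ->
  [/\ (* H^.(d) = 0 *) (kermx d0 == d1)%MS /\ (kermx d1 == d0)%MS,
      (* H_.(dstar) = 0 *) (kermx s0 == s1)%MS /\ (kermx s1 == s0)%MS,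
      (* dstard maps C_+^k isomorphically onto itself *)
      restr_iso (d0 *m s1) (kermx s0) /\ restr_iso (d1 *m s0) (kermx s1) &
      CM_torsion_is d0 d1 s0 s1
        (restr_det (d0 *m s1) (kermx s0) / restr_det (d1 *m s0) (kermx s1))].
Proof.
move=> dd01 dd10 ss01 ss10 no_kernel.
have uL : laplacian d0 d1 s0 s1 \in unitmx.
  rewrite -row_free_unit -kermx_eq0.
  by move: no_kernel; rewrite /eigenvalue /eigenspace raddf0 subr0 negbK.
have [uD0 uD1] : d0 *m s1 + s0 *m d1 \in unitmx /\ d1 *m s0 + s1 *m d0 \in unitmx.
  by move: uL; rewrite unitmxE /laplacian det_ublock unitrM -!unitmxE => /andP.
have uD0' : s0 *m d1 + d0 *m s1 \in unitmx by rewrite addrC.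
have uD1' : s1 *m d0 + d1 *m s0 \in unitmx by rewrite addrC.
split.
- by rewrite (kermx_eq_im dd01 dd10 uD0 uD1) (kermx_eq_im dd10 dd01 uD1 uD0).
- by rewrite (kermx_eq_im ss01 ss10 uD0' uD1') (kermx_eq_im ss10 ss01 uD1' uD0').
- by split; [exact: restr_iso_dstar_d ss01 ss10 uD0 uD1 | exact: restr_iso_dstar_d ss10 ss01 uD1 uD0].
- exact: CM_torsion_acyclic.
Qed.
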